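(* Let $\phi\colon\Sigma'\to\Sigma$ be a harmonic map of weighted metric graphs with boundary. Define $\phi^*f=f\circ\phi$ for $f\in\mathcal A^{0,0}(\Sigma,\partial\Sigma)$, $\phi^*(f_e\,d't_e)=(f_{\phi(e')}\circ\phi\;d_{e'}(\phi)\,d't_{e'})$, $\phi^*(f_e\,d''t_e)=(f_{\phi(e')}\circ\phi\;d_{e'}(\phi)\,d''t_{e'})$, and $\phi^*(f_e\,d't_ed''t_e)=(f_{\phi(e')}\circ\phi\;d_{e'}(\phi)^2\,d't_{e'}d''t_{e'})$, where the coefficient on $e'$ is taken to be $0$ if $\phi(e')$ is a vertex. Then $\phi^*$ maps $\mathcal A^{p,q}(\Sigma,\partial\Sigma)$ into $\mathcal A^{p,q}(\Sigma',\partial\Sigma')$ and is a homomorphism of bigraded differential algebras $\mathcal A^{\bullet,\bullet}(\Sigma,\partial\Sigma)\to\mathcal A^{\bullet,\bullet}(\Sigma',\partial\Sigma')$.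
   Context: Weighted metric graph with boundary $(\Sigma,\partial\Sigma)$: finite multigraph without loop edges, oriented edges $e$ with length $\ell(e)>0$, parametrization $t_e\colon[0,\ell(e)]\to e$ ($t_e(0)=e^-$, $t_{\bar e}(x)=t_e(\ell(e)-x)$), weight $w(e)=w(\bar e)\in\mathbb Z_{>0}$, boundary $\partial\Sigma\subset V(\Sigma)$; subdivisions allowed. Pair smoothness at a valency-2 vertex $v$ with outgoing $e_1,e_2$: $(f_1,f_2)$ smooth at $v$ iff $w(e_1)^n\frac{d^nf_1}{dt_{e_1}^n}(v)=(-1)^nw(e_2)^n\frac{d^nf_2}{dt_{e_2}^n}(v)$ for all $n\ge0$. $\mathcal A^{0,0}$: continuous $f$, smooth on edges, at interior $v$: constant near $v$ (valency 1), $(f|_{e_1},f|_{e_2})$ smooth at $v$ (valency 2), $\sum_{e^-=v}w(e)\frac{df}{dt_e}(v)=0$ (valency $\ge3$). $\mathcal A^{1,0}$/$\mathcal A^{0,1}$: $(f_e\,d't_e)$/$(f_e\,d''t_e)$ with $f_{\bar e}=-f_e$, zero near interior valency-1 vertices, $(w(e_1)f_{e_1},-w(e_2)f_{e_2})$ smooth at interior valency-2 vertices, $\sum_{e^-=v}w(e)f_e(v)=0$ at interior valency $\ge3$. $\mathcal A^{1,1}$: $(f_e\,d't_ed''t_e)$, $f_{\bar e}=f_e$, zero near interior valency-1 vertices, $(w(e_1)^2f_{e_1},w(e_2)^2f_{e_2})$ smooth at interior valency-2 vertices. $d',d''$: $d'f=(\frac{df}{dt_e}d't_e)$, $d''f=(\frac{df}{dt_e}d''t_e)$,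 $d''(f_e\,d't_e)=(-\frac{df_e}{dt_e}d't_ed''t_e)$, $d'(f_e\,d''t_e)=(\frac{df_e}{dt_e}d't_ed''t_e)$; wedge product $(f_e\,d't_e)\wedge(g_e\,d''t_e)=(f_eg_e\,d't_ed''t_e)$, alternating. Piecewise linear map: continuous, after subdivision vertices→vertices, edges→edges homeomorphically or →vertices, boundary condition (if $\phi(v')\in\partial\Sigma$ and $\phi$ nonconstant near $v'$ then $v'\in\partial\Sigma'$), $\phi\circ t_{e'}(x)=t_e(d_{e'}(\phi)x)$ with $d_{e'}(\phi)=\ell(e)/\ell(e')$. Harmonic: at each $v'\notin\partial\Sigma'$, $\sum_{e'^-=v',e'\mapsto e}\frac{w(e')}{w(e)}d_{e'}(\phi)$ independent of edge $e$ at $\phi(v')$. *)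

From Stdlib Require Import Reals ClassicalEpsilon.
From Coquelicot Require Import Coquelicot.
From mathcomp Require Import ssreflect ssrbool ssrfun eqtype ssrnat seq fintype bigop.

Set Implicit Arguments.
Unset Strict Implicit.
Unset Printing Implicit Defensive.

Open Scope R_scope.

Definition deriv_on (L : R) (g h : R -> R) : Prop :=
  forall x, 0 <= x <= L ->
    filterlim (fun y => (g y - g x) / (y - x))
      (within (fun y => 0 <= y <= L /\ y <> x) (locally x))
      (locally (h x)).

Definition is_dtower (L : R) (f : R -> R) (D : nat -> R -> R) : Prop :=
  (forall x, 0 <= x <= L -> D 0%nat x = f x) /\
  (forall n, deriv_on L (D n) (D (S n))).

Definition smooth_on (L : R) (f : R -> R) : Prop := exists D, is_dtower L f D.

(* the n-th derivative d^n f / dt^n on [0,L] (meaningful when smooth_on L f) *)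
Definition Dn (L : R) (f : R -> R) (n : nat) (x : R) : R :=
  epsilon (inhabits (fun (_ : nat) (_ : R) => 0)) (is_dtower L f) n x.

Record wmgraph := WMGraph {
  V : finType;
  E : finType;
  src : E -> V;
  rev : E -> E;
  rev_invol : forall e, rev (rev e) = e;
  rev_neq : forall e, rev e <> e;
  no_loop : forall e, src (rev e) <> src e;
  len : E -> R;
  len_pos : forall e, 0 < len e;
  len_rev : forall e, len (rev e) = len e;
  wt : E -> nat;
  wt_pos : forall e, (0 < wt e)%N;
  wt_rev : forall e, wt (rev e) = wt e;
  bdry : V -> bool
}.

Arguments src {_}. Arguments rev {_}. Arguments len {_}. Arguments wt {_}.
Arguments bdry {_}.

(* the parametrization: the point of edge e with parameter x in [0, len e]
   is identified with the point of rev e with parameter len e - x. *)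

Definition valency (G : wmgraph) (v : V G) : nat := #|[pred e : E G | src e == v]|.

Definition wR (G : wmgraph) (e : E G) : R := INR (wt e).

Definition sum_out (G : wmgraph) (v : V G) (F : E G -> R) : R :=
  \big[Rplus/0]_(e : E G | src e == v) F e.

(* smoothness of a pair (f1,f2) at an interior valency-2 vertex v, with
   e1, e2 the two edges going out of v (so v = t_{e_i}(0)) *)
Definition pair_smooth (G : wmgraph) (e1 e2 : E G) (f1 f2 : R -> R) : Prop :=
  forall n : nat,
    (wR e1) ^ n * Dn (len e1) f1 n 0 = (-1) ^ n * (wR e2) ^ n * Dn (len e2) f2 n 0.

(* A function on Sigma: its values at vertices and, on each oriented edge e,
   the function x |-> f(t_e(x)) (only its values on [0, len e] matter). *)
Record fun0 (G : wmgraph) := Fun0 { fV : V G -> R ; fE : E G -> R -> R }.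
Arguments fV {G}. Arguments fE {G}.

(* coefficient families (f_e)_e of a (1,0)-, (0,1)- or (1,1)-form:
   the form is (f_e d't_e), (f_e d''t_e) or (f_e d't_e d''t_e). *)
Definition coef (G : wmgraph) := E G -> R -> R.

Definition in_edge (G : wmgraph) (e : E G) (x : R) := 0 <= x <= len e.

Definition eq0 (G : wmgraph) (f g : fun0 G) : Prop :=
  (forall v, fV f v = fV g v) /\
  (forall e x, in_edge e x -> fE f e x = fE g e x).
Definition eqc (G : wmgraph) (a b : coef G) : Prop :=
  forall e x, in_edge e x -> a e x = b e x.

Definition A00 (G : wmgraph) (f : fun0 G) : Prop :=
  (* f is a well defined continuous function on Sigma *)
  (forall e, fE f e 0 = fV f (src e)) /\
  (forall e x, in_edge e x -> fE f (rev e) x = fE f e (len e - x)) /\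
  (forall e, smooth_on (len e) (fE f e)) /\
  (forall v, bdry v = false ->
     (valency v = 1%N ->
        forall e, src e = v ->
          exists eps, 0 < eps /\ forall x, 0 <= x <= eps -> fE f e x = fV f v) /\
     (valency v = 2%N ->
        forall e1 e2, src e1 = v -> src e2 = v -> e1 <> e2 ->
          pair_smooth e1 e2 (fE f e1) (fE f e2)) /\
     ((3 <= valency v)%N ->
        sum_out v (fun e => wR e * Dn (len e) (fE f e) 1 0) = 0)).

Definition A10 (G : wmgraph) (a : coef G) : Prop :=
  (forall e x, in_edge e x -> a (rev e) x = - a e (len e - x)) /\
  (forall e, smooth_on (len e) (a e)) /\
  (forall v, bdry v = false ->
     (valency v = 1%N ->
        forall e, src e = v ->
          exists eps, 0 < eps /\ forall x, 0 <= x <= eps -> a e x = 0) /\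
     (valency v = 2%N ->
        forall e1 e2, src e1 = v -> src e2 = v -> e1 <> e2 ->
          pair_smooth e1 e2 (fun x => wR e1 * a e1 x) (fun x => - (wR e2 * a e2 x))) /\
     ((3 <= valency v)%N -> sum_out v (fun e => wR e * a e 0) = 0)).

Definition A01 (G : wmgraph) (a : coef G) : Prop := A10 a.

Definition A11 (G : wmgraph) (a : coef G) : Prop :=
  (forall e x, in_edge e x -> a (rev e) x = a e (len e - x)) /\
  (forall e, smooth_on (len e) (a e)) /\
  (forall v, bdry v = false ->
     (valency v = 1%N ->
        forall e, src e = v ->
          exists eps, 0 < eps /\ forall x, 0 <= x <= eps -> a e x = 0) /\
     (valency v = 2%N ->
        forall e1 e2, src e1 = v -> src e2 = v -> e1 <> e2 ->
          pair_smooth e1 e2 (fun x => (wR e1) ^ 2 * a e1 x)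
                            (fun x => (wR e2) ^ 2 * a e2 x))).

Definition one0 (G : wmgraph) : fun0 G := Fun0 (fun _ => 1) (fun _ _ => 1).
Definition add0 (G : wmgraph) (f g : fun0 G) : fun0 G :=
  Fun0 (fun v => fV f v + fV g v) (fun e x => fE f e x + fE g e x).
Definition scale0 (G : wmgraph) (c : R) (f : fun0 G) : fun0 G :=
  Fun0 (fun v => c * fV f v) (fun e x => c * fE f e x).
Definition mul0 (G : wmgraph) (f g : fun0 G) : fun0 G :=
  Fun0 (fun v => fV f v * fV g v) (fun e x => fE f e x * fE g e x).

Definition addc (G : wmgraph) (a b : coef G) : coef G := fun e x => a e x + b e x.
Definition scalec (G : wmgraph) (c : R) (a : coef G) : coef G := fun e x => c * a e x.
Definition mul0c (G : wmgraph) (f : fun0 G) (a : coef G) : coef G :=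
  fun e x => fE f e x * a e x.
(* (a d't) /\ (b d''t) = (a b d't d''t) *)
Definition wedge10_01 (G : wmgraph) (a b : coef G) : coef G := fun e x => a e x * b e x.
(* (b d''t) /\ (a d't) = - (a b d't d''t)  (alternating) *)
Definition wedge01_10 (G : wmgraph) (b a : coef G) : coef G := fun e x => - (b e x * a e x).

Definition d'0 (G : wmgraph) (f : fun0 G) : coef G := fun e x => Dn (len e) (fE f e) 1 x.
Definition d''0 (G : wmgraph) (f : fun0 G) : coef G := fun e x => Dn (len e) (fE f e) 1 x.
(* d''(f_e d't_e) = (- df_e/dt_e d't_e d''t_e) *)
Definition d''10 (G : wmgraph) (a : coef G) : coef G := fun e x => - Dn (len e) (a e) 1 x.
Definition d'01 (G : wmgraph) (a : coef G) : coef G := fun e x => Dn (len e) (a e) 1 x.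

(* Piecewise linear maps (already cellular: vertices to vertices, edges  *)
(* to edges linearly or to vertices) and harmonic maps                  *)

Record plmap (G' G : wmgraph) := PLMap {
  phiV : V G' -> V G;
  phiE : E G' -> option (E G);   (* None: the edge is contracted to a vertex *)
  phiE_src : forall e' e, phiE e' = Some e -> src e = phiV (src e');
  phiE_rev : forall e', phiE (rev e') = option_map rev (phiE e');
  phiE_contr : forall e', phiE e' = None -> phiV (src (rev e')) = phiV (src e');
  phi_bdry : forall v', bdry (phiV v') ->
     (exists e', src e' = v' /\ phiE e' <> None) -> bdry v'
}.
Arguments phiV {G' G}. Arguments phiE {G' G}.
(* On an edge e' with phiE e' = Some e the map is
   phi (t_{e'}(x)) = t_e (d_{e'}(phi) x),  d_{e'}(phi) = len e / len e'. *)

Definition dphi (G' G : wmgraph) (phi : plmap G' G) (e' : E G') : R :=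
  match phiE phi e' with Some e => len e / len e' | None => 0 end.

Definition harmonic (G' G : wmgraph) (phi : plmap G' G) : Prop :=
  forall v' : V G', bdry v' = false ->
  forall e1 e2 : E G, src e1 = phiV phi v' -> src e2 = phiV phi v' ->
    \big[Rplus/0]_(e' : E G' | (src e' == v') && (phiE phi e' == Some e1))
        (wR e' / wR e1 * dphi phi e')
    = \big[Rplus/0]_(e' : E G' | (src e' == v') && (phiE phi e' == Some e2))
        (wR e' / wR e2 * dphi phi e').

Definition pull0 (G' G : wmgraph) (phi : plmap G' G) (f : fun0 G) : fun0 G' :=
  Fun0 (fun v' => fV f (phiV phi v'))
       (fun e' x => match phiE phi e' with
                    | Some e => fE f e (dphi phi e' * x)
                    | None => fV f (phiV phi (src e'))
                    end).

Definition pull1 (G' G : wmgraph) (phi : plmap G' G) (a : coef G) : coef G' :=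
  fun e' x => match phiE phi e' with
              | Some e => a e (dphi phi e' * x) * dphi phi e'
              | None => 0
              end.

Definition pull11 (G' G : wmgraph) (phi : plmap G' G) (a : coef G) : coef G' :=
  fun e' x => match phiE phi e' with
              | Some e => a e (dphi phi e' * x) * (dphi phi e') ^ 2
              | None => 0
              end.

(* On an edge e' mapped onto an edge e the pull-back of a coefficient is its
   affine reparametrisation x |-> d x, d = d_{e'}(phi), times d^k for a form with
   k differentials; its n-th derivative picks up a factor d^n, so smoothness,
   the orientation symmetry and the commutation with d', d'' are computations on
   single edges.  At an interior vertex v' harmonicity says two things.  If some
   edge at v' is not contracted, every edge at phi(v') is hit; hence a vertex v'
   of valency 2 either carries locally constant pulled-back data or is mapped
   onto an interior vertex of valency 2 with w(e'_i) d_{e'_i} / w(e_i) equal to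
   one constant rho, and multiplying the smoothness identities at phi(v') by
   rho^n gives those at v'.  At a vertex of valency >= 3 the balancing sum
   regroups by image edge into the harmonicity constant times the balancing sum
   at phi(v'), and the latter vanishes at every interior vertex, whatever its
   valency.  The algebra
   operations are pointwise, so pull-back respects them edge by edge. *)

From HB Require Import structures.
From Pilot Require Import Defs.
From Stdlib Require Import Reals Lra ClassicalEpsilon.
From Coquelicot Require Import Coquelicot.
From mathcomp Require Import ssreflect ssrbool ssrfun eqtype ssrnat seq fintype bigop.
Open Scope R_scope.
Set Implicit Arguments.
Unset Strict Implicit.

(** * Smooth functions on a closed interval *)

Lemma ball_Rabs (x e y : R) : ball x e y <-> Rabs (y - x) < e.
Proof. by []. Qed.

Lemma punctured_proper L x : 0 < L -> 0 <= x <= L ->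
  ProperFilter' (within (fun y => 0 <= y <= L /\ y <> x) (locally x)).
Proof.
move=> HL Hx; split; last exact: within_filter.
case=> eps /= Heps.
have Hr : 0 < Rmin eps L / 2 by have := Rmin_pos _ _ (cond_pos eps) HL; lra.
have Hre : Rmin eps L / 2 < eps by have := Rmin_l eps L; lra.
have HrL : Rmin eps L / 2 <= L / 2 by have := Rmin_r eps L; lra.
case: (Rle_dec x (L / 2)) => Hx2.
- apply: (Heps (x + Rmin eps L / 2)); last by split; lra.
  by apply/ball_Rabs; rewrite Rabs_right; lra.
- apply: (Heps (x - Rmin eps L / 2)); last by split; lra.
  by apply/ball_Rabs; rewrite Rabs_left; lra.
Qed.

Lemma deriv_on_unique L g h1 h2 x : 0 < L -> 0 <= x <= L ->
  deriv_on L g h1 -> deriv_on L g h2 -> h1 x = h2 x.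
Proof.
move=> HL Hx D1 D2.
exact: (@filterlim_locally_unique _ R_AbsRing R_NormedModule _ (punctured_proper HL Hx) _ _ _
         (D1 x Hx) (D2 x Hx)).
Qed.

Lemma deriv_on_ext L g1 g2 h1 h2 :
  (forall x, 0 <= x <= L -> g1 x = g2 x) -> (forall x, 0 <= x <= L -> h1 x = h2 x) ->
  deriv_on L g1 h1 -> deriv_on L g2 h2.
Proof.
move=> Eg Eh Dg x Hx; rewrite -Eh //.
by apply: filterlim_within_ext (Dg x Hx) => y [Hy _]; rewrite !Eg.
Qed.

Lemma deriv_on_rescale L L' f f' c d : 0 < d -> d * L' = L -> deriv_on L f f' ->
  deriv_on L' (fun x => c * f (d * x)) (fun x => c * d * f' (d * x)).
Proof.
move=> Hd HdL Df x Hx.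
have in_L y : 0 <= y <= L' -> 0 <= d * y <= L.
  by move=> Hy; rewrite -HdL; split; [apply: Rmult_le_pos|apply: Rmult_le_compat_l]; lra.
have Hmap : filterlim (fun y => d * y) (within (fun y => 0 <= y <= L' /\ y <> x) (locally x))
                      (within (fun z => 0 <= z <= L /\ z <> d * x) (locally (d * x))).
  move=> Q [eps HQ].
  have Hed : 0 < eps / d by apply: Rdiv_lt_0_compat => //; exact: cond_pos.
  exists (mkposreal _ Hed) => y Hy [Hy' Hyx]; apply: HQ.
    move/ball_Rabs: Hy => Hy; apply/ball_Rabs.
    have -> : d * y - d * x = d * (y - x) by ring.
    rewrite Rabs_mult Rabs_right; last lra.
    apply: (Rlt_le_trans _ (d * (eps / d))); first exact: Rmult_lt_compat_l.
    right; field; lra.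
  split; first exact: in_L.
  by move=> E; apply: Hyx; apply: (Rmult_eq_reg_l d); lra.
have Hq := @filterlim_comp _ _ _ _ _ _ _ _ Hmap (Df _ (in_L _ Hx)).
have := @filterlim_comp _ _ _ _ _ _ _ _ Hq (filterlim_scal_r (c * d) (f' (d * x))).
apply: filterlim_within_ext => y [_ Hyx].
rewrite /scal /= /mult /=.
have : d * y - d * x <> 0 by move=> E; apply: Hyx; apply: (Rmult_eq_reg_l d); lra.
move=> Hne; field; split => //; lra.
Qed.

Lemma deriv_on_const L c : deriv_on L (fun _ => c) (fun _ => 0).
Proof.
move=> x _; apply: filterlim_within_ext (filterlim_const 0) => y _.
by rewrite Rminus_eq_0 /Rdiv Rmult_0_l.
Qed.

Lemma deriv_on_locally_const L g g' c m x : 0 < L -> 0 <= x < m ->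
  (forall y, 0 <= y < m -> g y = c) -> deriv_on L g g' -> 0 <= x <= L -> g' x = 0.
Proof.
move=> HL Hx Hg Dg HxL.
have Hr : 0 < m - x by lra.
apply: (@filterlim_locally_unique _ R_AbsRing R_NormedModule _ (punctured_proper HL HxL) _ _ _
         (Dg x HxL)).
apply: (filterlim_ext_loc (fun _ => 0)); last exact: filterlim_const.
exists (mkposreal _ Hr) => y Hy [[Hy0 _] _].
have Hym : y < m by move/ball_Rabs: Hy => /= Hy; have := Rle_abs (y - x); lra.
have [-> ->] : g y = c /\ g x = c by split; apply: Hg; lra.
by rewrite Rminus_eq_0 /Rdiv Rmult_0_l.
Qed.

Lemma dtower_unique L f D1 D2 : 0 < L -> is_dtower L f D1 -> is_dtower L f D2 ->
  forall n x, 0 <= x <= L -> D1 n x = D2 n x.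
Proof.
move=> HL [D10 D1S] [D20 D2S]; elim => [|n IHn] x Hx; first by rewrite D10 // D20.
apply: (deriv_on_unique HL Hx _ (D2S n)).
exact: deriv_on_ext IHn _ (D1S n).
Qed.

Lemma Dn_dtower L f : smooth_on L f -> is_dtower L f (Dn L f).
Proof. exact: epsilon_spec. Qed.

Lemma Dn_eq L f D n x : 0 < L -> is_dtower L f D -> 0 <= x <= L -> Dn L f n x = D n x.
Proof. by move=> HL HD; apply: (dtower_unique HL (Dn_dtower _) HD); exists D. Qed.

Lemma Dn_0 L f x : smooth_on L f -> 0 <= x <= L -> Dn L f 0 x = f x.
Proof. by move=> /Dn_dtower [D0 _]; exact: D0. Qed.

Lemma dtower_rescale L L' f g c d : 0 < d -> d * L' = L -> smooth_on L f ->
  (forall x, 0 <= x <= L' -> g x = c * f (d * x)) ->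
  is_dtower L' g (fun n x => c * d ^ n * Dn L f n (d * x)).
Proof.
move=> Hd HdL /Dn_dtower [D0 DS] Hg; split.
  move=> x Hx; rewrite Hg // D0 /=; first ring.
  by rewrite -HdL; split; [apply: Rmult_le_pos|apply: Rmult_le_compat_l]; lra.
move=> n; apply: (deriv_on_ext _ _ (deriv_on_rescale (c := c * d ^ n) Hd HdL (DS n))) => // x _.
by rewrite /=; ring.
Qed.

Lemma smooth_on_rescale L L' f g c d : 0 < d -> d * L' = L -> smooth_on L f ->
  (forall x, 0 <= x <= L' -> g x = c * f (d * x)) -> smooth_on L' g.
Proof. by move=> Hd HdL Hf Hg; eexists; exact: dtower_rescale Hd HdL Hf Hg. Qed.

Lemma Dn_rescale L L' f g c d n x : 0 < L' -> 0 < d -> d * L' = L -> smooth_on L f ->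
  (forall x, 0 <= x <= L' -> g x = c * f (d * x)) ->
  0 <= x <= L' -> Dn L' g n x = c * d ^ n * Dn L f n (d * x).
Proof. by move=> HL' Hd HdL Hf Hg; apply: Dn_eq HL' (dtower_rescale Hd HdL Hf Hg). Qed.

Lemma smooth_on_scal L f g c : smooth_on L f ->
  (forall x, 0 <= x <= L -> g x = c * f x) -> smooth_on L g.
Proof.
move=> Hf Hg; apply: (smooth_on_rescale (c := c) Rlt_0_1 (Rmult_1_l L) Hf) => x Hx.
by rewrite Rmult_1_l; exact: Hg.
Qed.

Lemma dtower_const L g c : (forall x, 0 <= x <= L -> g x = c) ->
  is_dtower L g (fun n _ => if n is 0 then c else 0).
Proof. by move=> Hg; split=> [x Hx|[|n]]; [rewrite Hg|exact: deriv_on_const..]. Qed.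

Lemma smooth_on_const L g c : (forall x, 0 <= x <= L -> g x = c) -> smooth_on L g.
Proof. by move=> Hg; eexists; exact: dtower_const Hg. Qed.

Lemma Dn_const L g c n x : 0 < L -> (forall x, 0 <= x <= L -> g x = c) ->
  0 <= x <= L -> Dn L g n x = if n is 0 then c else 0.
Proof. by move=> HL Hg; apply: Dn_eq HL (dtower_const Hg). Qed.

Definition const_near0 (h : R -> R) (c : R) : Prop :=
  exists eps, 0 < eps /\ forall x, 0 <= x <= eps -> h x = c.

Lemma Dn_const_near0 L g c n : 0 < L -> smooth_on L g -> const_near0 g c ->
  Dn L g n 0 = if n is 0 then c else 0.
Proof.
move=> HL /Dn_dtower [D0 DS] [eps [Heps Hg]].
have Hm : 0 < Rmin eps L by apply: Rmin_pos.
have [HmL Hme] := (Rmin_r eps L, Rmin_l eps L).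
suff near0 : forall n x, 0 <= x < Rmin eps L -> Dn L g n x = if n is 0 then c else 0.
  by apply: near0; lra.
elim=> [|k IHk] x Hx; first by rewrite D0 ?Hg //; lra.
by apply: (deriv_on_locally_const HL Hx IHk (DS k)); lra.
Qed.

Lemma const_near0_dilate h c d : 0 < d -> const_near0 h c -> const_near0 (fun x => h (d * x)) c.
Proof.
move=> Hd [eps [Heps Hh]]; exists (eps / d); split; first exact: Rdiv_lt_0_compat.
move=> x Hx; apply: Hh; split; first by apply: Rmult_le_pos; lra.
have -> : eps = d * (eps / d) by field; lra.
by apply: Rmult_le_compat_l; lra.
Qed.

Lemma const_near0_map h F c c' : const_near0 h c ->
  (forall x, h x = c -> F x = c') -> const_near0 F c'.
Proof. by move=> [eps [Heps Hh]] HF; exists eps; split=> // x Hx; apply: HF; apply: Hh. Qed.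

(** * Vertex conditions *)

HB.instance Definition _ := Monoid.isComLaw.Build R 0 Rplus
  (fun x y z => esym (Rplus_assoc x y z)) Rplus_comm Rplus_0_l.

Section RealSums.
Variables (I : finType) (P : pred I).

Lemma sumR_mull (F : I -> R) c :
  \big[Rplus/0]_(i | P i) (c * F i) = c * \big[Rplus/0]_(i | P i) F i.
Proof. by apply: (big_rec2 (fun a b => a = c * b)) => [|i a b _ ->]; ring. Qed.

Lemma sumR_mulr (F : I -> R) c :
  \big[Rplus/0]_(i | P i) (F i * c) = \big[Rplus/0]_(i | P i) F i * c.
Proof. by rewrite Rmult_comm -sumR_mull; apply: eq_bigr => i _; ring. Qed.

Lemma sumR_gt0 (F : I -> R) i0 : P i0 -> 0 < F i0 ->
  (forall i, P i -> 0 <= F i) -> 0 < \big[Rplus/0]_(i | P i) F i.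
Proof.
move=> Pi0 Fi0 F_ge0; rewrite (bigD1 i0) //=.
suff : 0 <= \big[Rplus/0]_(i | P i && (i != i0)) F i by lra.
by apply: (big_ind (fun x => 0 <= x)) => [|x y|i /andP[Pi _]]; [lra|lra|exact: F_ge0].
Qed.

End RealSums.

Section Valency.
Variable G : wmgraph.
Implicit Types (v : V G) (e : E G).

Lemma in_edge0 e : in_edge e 0.
Proof. by rewrite /in_edge; have := len_pos e; lra. Qed.

Lemma wR_gt0 e : 0 < wR e.
Proof. by apply: lt_0_INR; apply/ltP; exact: wt_pos. Qed.

Lemma valency1_uniq v e e2 : valency v = 1%N -> src e = v -> src e2 = v -> e2 = e.
Proof.
move=> Hv He He2; have : (#|[pred e : E G | src e == v]| <= 1)%N by rewrite -/(valency v) Hv.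
move/card_le1P => /(_ e); rewrite inE He eqxx => /(_ isT e2).
by rewrite !inE He2 eqxx => /esym/eqP.
Qed.

Lemma valency1_of_uniq v e : src e = v -> (forall e2, src e2 = v -> e2 = e) -> valency v = 1%N.
Proof.
move=> He Huniq; apply: (@eq_card1 _ e) => e2; rewrite !inE.
by apply/eqP/eqP => [/Huniq|->].
Qed.

Lemma valency2_cases v e1 e2 e3 : valency v = 2%N -> src e1 = v -> src e2 = v -> e1 <> e2 ->
  src e3 = v -> e3 = e1 \/ e3 = e2.
Proof.
move=> Hv H1 H2 H12 H3.
case: (e3 =P e1) => [|N1]; first by left.
case: (e3 =P e2) => [|N2]; first by right.
have : (2 < #|[pred e : E G | src e == v]|)%N.
  apply/card_gt2P; exists e1, e2, e3; rewrite !inE H1 H2 H3 eqxx.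
  split=> //; split; apply/eqP => E; [exact: H12 E|exact: N2 (esym E)|exact: N1 E].
by rewrite -/(valency v) Hv.
Qed.

Lemma valency2_of_cases v e1 e2 : src e1 = v -> src e2 = v -> e1 <> e2 ->
  (forall e3, src e3 = v -> e3 = e1 \/ e3 = e2) -> valency v = 2%N.
Proof.
move=> H1 H2 H12 Hcases; rewrite /valency (@eq_card _ _ (pred2 e1 e2)).
  by rewrite card2; case: (e1 =P e2).
move=> e3 /=; apply/eqP/orP => [/Hcases|[/eqP->|/eqP->]] //.
by case=> ->; rewrite eqxx; [left|right].
Qed.

Lemma sum_out_valency2 v e1 e2 F : valency v = 2%N -> src e1 = v -> src e2 = v -> e1 <> e2 ->
  sum_out v F = F e1 + F e2.
Proof.
move=> Hv H1 H2 H12; rewrite /sum_out (bigD1 e1) /=; last by rewrite H1.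
congr Rplus; apply: big_pred1 => e3 /=.
apply/andP/eqP => [[/eqP H3 /eqP N]|->]; first by case: (valency2_cases Hv H1 H2 H12 H3).
by split; [rewrite H2|apply/eqP => E; exact: H12 (esym E)].
Qed.

Lemma sum_out_eq0 v F :
  (valency v = 1%N -> forall e, src e = v -> F e = 0) ->
  (valency v = 2%N -> forall e1 e2, src e1 = v -> src e2 = v -> e1 <> e2 -> F e1 + F e2 = 0) ->
  ((3 <= valency v)%N -> sum_out v F = 0) -> sum_out v F = 0.
Proof.
move=> F1 F2 F3; case Hv: (valency v) => [|[|[|n]]].
- by rewrite /sum_out big_pred0 // => e; apply: (card0_eq Hv).
- by apply: big1 => e /eqP; exact: F1.
- have : (1 < #|[pred e : E G | src e == v]|)%N by rewrite -/(valency v) Hv.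
  case/card_gt1P => e1 [e2 [/eqP H1 /eqP H2 /eqP H12]].
  by rewrite (sum_out_valency2 F Hv H1 H2 H12); exact: F2.
- by apply: F3; rewrite Hv.
Qed.

End Valency.

Lemma A00_balanced (G : wmgraph) (f : fun0 G) v : A00 f -> bdry v = false ->
  sum_out v (fun e => wR e * Dn (len e) (fE f e) 1 0) = 0.
Proof.
move=> [_ [_ [f_sm f_int]]] Hb; have [int1 [int2 int3]] := f_int v Hb.
apply: sum_out_eq0 => // [Hv e He|Hv e1 e2 H1 H2 H12].
  by rewrite (Dn_const_near0 _ (len_pos e) (f_sm e) (int1 Hv e He)) Rmult_0_r.
by have := int2 Hv e1 e2 H1 H2 H12 1%N; rewrite /=; lra.
Qed.

Lemma A10_balanced (G : wmgraph) (a : coef G) v : A10 a -> bdry v = false ->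
  sum_out v (fun e => wR e * a e 0) = 0.
Proof.
move=> [_ [a_sm a_int]] Hb; have [int1 [int2 int3]] := a_int v Hb.
apply: sum_out_eq0 => // [Hv e He|Hv e1 e2 H1 H2 H12].
  by have [eps [Heps ->]] := int1 Hv e He; [ring|lra].
have S1 : smooth_on (len e1) (fun x => wR e1 * a e1 x) by apply: smooth_on_scal (a_sm e1) _.
have S2 : smooth_on (len e2) (fun x => - (wR e2 * a e2 x)).
  by apply: (smooth_on_scal (c := - wR e2) (a_sm e2)) => x _; ring.
have := int2 Hv e1 e2 H1 H2 H12 0%N.
by rewrite (Dn_0 S1 (in_edge0 e1)) (Dn_0 S2 (in_edge0 e2)) /=; lra.
Qed.

Lemma pair_smooth_const (G : wmgraph) (e1 e2 : E G) h1 h2 c :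
  smooth_on (len e1) h1 -> smooth_on (len e2) h2 -> const_near0 h1 c -> const_near0 h2 c ->
  pair_smooth e1 e2 h1 h2.
Proof.
move=> S1 S2 C1 C2 n.
rewrite (Dn_const_near0 n (len_pos e1) S1 C1) (Dn_const_near0 n (len_pos e2) S2 C2).
by case: n => [|n] /=; ring.
Qed.

Lemma pair_smooth_rescale (G' G : wmgraph) (e1' e2' : E G') (e1 e2 : E G) h1 h2 g1 g2 c rho d1 d2 :
  smooth_on (len e1) h1 -> smooth_on (len e2) h2 ->
  0 < d1 -> d1 * len e1' = len e1 -> 0 < d2 -> d2 * len e2' = len e2 ->
  wR e1' * d1 = rho * wR e1 -> wR e2' * d2 = rho * wR e2 ->
  (forall x, 0 <= x <= len e1' -> g1 x = c * h1 (d1 * x)) ->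
  (forall x, 0 <= x <= len e2' -> g2 x = c * h2 (d2 * x)) ->
  pair_smooth e1 e2 h1 h2 -> pair_smooth e1' e2' g1 g2.
Proof.
move=> S1 S2 Hd1 HL1 Hd2 HL2 W1 W2 Hg1 Hg2 Hh n.
rewrite (Dn_rescale n (len_pos e1') Hd1 HL1 S1 Hg1 (in_edge0 e1')).
rewrite (Dn_rescale n (len_pos e2') Hd2 HL2 S2 Hg2 (in_edge0 e2')) !Rmult_0_r.
have rescale_pow w' d w : w' * d = rho * w -> w' ^ n * d ^ n = rho ^ n * w ^ n.
  by rewrite -!Rpow_mult_distr => ->.
transitivity (c * (wR e1' ^ n * d1 ^ n) * Dn (len e1) h1 n 0); first ring.
rewrite (rescale_pow _ _ _ W1).
transitivity (c * rho ^ n * (wR e1 ^ n * Dn (len e1) h1 n 0)); first ring.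
rewrite Hh; transitivity ((-1) ^ n * (c * (wR e2' ^ n * d2 ^ n) * Dn (len e2) h2 n 0)); last ring.
by rewrite (rescale_pow _ _ _ W2); ring.
Qed.

(** * Pull-back along a piecewise linear map *)

Section PLMap.
Variables (G' G : wmgraph) (phi : plmap G' G).

Lemma dphi_Some e' e : phiE phi e' = Some e -> dphi phi e' = len e / len e'.
Proof. by rewrite /dphi => ->. Qed.

Lemma dphi_gt0 e' e : phiE phi e' = Some e -> 0 < dphi phi e'.
Proof. by move/dphi_Some ->; apply: Rdiv_lt_0_compat; exact: len_pos. Qed.

Lemma dphi_ge0 e' : 0 <= dphi phi e'.
Proof. by case Hp: (phiE phi e') => [e|]; [exact/Rlt_le/(dphi_gt0 Hp)|rewrite /dphi Hp; lra]. Qed.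

Lemma dphi_len e' e : phiE phi e' = Some e -> dphi phi e' * len e' = len e.
Proof. by move/dphi_Some ->; field; have := len_pos e'; lra. Qed.

Lemma dphi_rev e' : dphi phi (Defs.rev e') = dphi phi e'.
Proof. by rewrite /dphi phiE_rev; case: (phiE phi e') => [e|] //=; rewrite !len_rev. Qed.

Lemma dphi_in_edge e' e x : phiE phi e' = Some e -> 0 <= x <= len e' ->
  0 <= dphi phi e' * x <= len e.
Proof.
move=> Hp Hx; have Hd := dphi_gt0 Hp; rewrite -(dphi_len Hp).
by split; [apply: Rmult_le_pos|apply: Rmult_le_compat_l]; lra.
Qed.

Lemma dphi_flip e' e x : phiE phi e' = Some e ->
  dphi phi e' * (len e' - x) = len e - dphi phi e' * x.
Proof. by move=> Hp; rewrite -(dphi_len Hp); ring. Qed.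

Lemma interior_image v' e' e : bdry v' = false -> src e' = v' -> phiE phi e' = Some e ->
  bdry (phiV phi v') = false.
Proof.
move=> Hb He Hp; apply/negbTE/negP => /phi_bdry Hb'.
by rewrite Hb' in Hb => //; exists e'; rewrite Hp.
Qed.

Lemma smooth_on_pull e' (g : R -> R) (h : E G -> R -> R) k c0 :
  (forall e, smooth_on (len e) (h e)) ->
  (forall x, 0 <= x <= len e' ->
     g x = if phiE phi e' is Some e then h e (dphi phi e' * x) * k else c0) ->
  smooth_on (len e') g.
Proof.
move=> Hh; case Hp: (phiE phi e') => [e|] Hg; last exact: smooth_on_const Hg.
by apply: (smooth_on_rescale (c := k) (dphi_gt0 Hp) (dphi_len Hp) (Hh e)) => x /Hg ->; ring.
Qed.

Lemma Dn1_pull e' (g : R -> R) (h : E G -> R -> R) k c0 x :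
  (forall e, smooth_on (len e) (h e)) ->
  (forall x, 0 <= x <= len e' ->
     g x = if phiE phi e' is Some e then h e (dphi phi e' * x) * k else c0) ->
  0 <= x <= len e' ->
  Dn (len e') g 1 x =
    if phiE phi e' is Some e then Dn (len e) (h e) 1 (dphi phi e' * x) * (k * dphi phi e') else 0.
Proof.
move=> Hh; case Hp: (phiE phi e') => [e|] Hg Hx; last exact: Dn_const (len_pos e') Hg Hx.
rewrite (Dn_rescale (c := k) 1 (len_pos e') (dphi_gt0 Hp) (dphi_len Hp) (Hh e) _ Hx) /=; first ring.
by move=> y /Hg ->; ring.
Qed.

Lemma pair_smooth_pull e1' e2' e1 e2 h1 h2 (g1 g2 : R -> R) c :
  phiE phi e1' = Some e1 -> phiE phi e2' = Some e2 ->
  wR e1' / wR e1 * dphi phi e1' = wR e2' / wR e2 * dphi phi e2' ->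
  smooth_on (len e1) h1 -> smooth_on (len e2) h2 ->
  (forall x, 0 <= x <= len e1' -> g1 x = c * h1 (dphi phi e1' * x)) ->
  (forall x, 0 <= x <= len e2' -> g2 x = c * h2 (dphi phi e2' * x)) ->
  pair_smooth e1 e2 h1 h2 -> pair_smooth e1' e2' g1 g2.
Proof.
move=> Hp1 Hp2 Hr S1 S2 Hg1 Hg2 Hh; have [w1 w2] := (wR_gt0 e1, wR_gt0 e2).
apply: (pair_smooth_rescale (rho := wR e1' / wR e1 * dphi phi e1') S1 S2
          (dphi_gt0 Hp1) (dphi_len Hp1) (dphi_gt0 Hp2) (dphi_len Hp2) _ _ Hg1 Hg2 Hh).
  by field; lra.
by rewrite Hr; field; lra.
Qed.

Lemma pull0_smooth f e' : A00 f -> smooth_on (len e') (fE (pull0 phi f) e').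
Proof.
move=> [_ [_ [f_sm _]]].
apply: (smooth_on_pull (k := 1) (c0 := fV f (phiV phi (src e'))) f_sm) => x _ /=.
by case: (phiE phi e') => *; ring.
Qed.

Lemma pull1_smooth a e' : A10 a -> smooth_on (len e') (pull1 phi a e').
Proof. by move=> [_ [a_sm _]]; apply: (smooth_on_pull (k := dphi phi e') (c0 := 0) a_sm). Qed.

Lemma pull11_smooth a e' : A11 a -> smooth_on (len e') (pull11 phi a e').
Proof. by move=> [_ [a_sm _]]; apply: (smooth_on_pull (k := dphi phi e' ^ 2) (c0 := 0) a_sm). Qed.

Lemma pull1_d'0 f : A00 f -> eqc (pull1 phi (d'0 f)) (d'0 (pull0 phi f)).
Proof.
move=> [_ [_ [f_sm _]]] e' x Hx.
rewrite /pull1 /d'0 (Dn1_pull (k := 1) (c0 := fV f (phiV phi (src e'))) f_sm _ Hx).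
  by case: (phiE phi e') => *; ring.
by move=> y _ /=; case: (phiE phi e') => *; ring.
Qed.

Lemma pull11_d'01 a : A10 a -> eqc (pull11 phi (d'01 a)) (d'01 (pull1 phi a)).
Proof.
move=> [_ [a_sm _]] e' x Hx.
rewrite /pull11 /d'01 (Dn1_pull (k := dphi phi e') (c0 := 0) a_sm _ Hx) //.
by case: (phiE phi e') => *; ring.
Qed.

Lemma pull11_d''10 a : A10 a -> eqc (pull11 phi (d''10 a)) (d''10 (pull1 phi a)).
Proof.
move=> Ha e' x Hx; have := pull11_d'01 Ha Hx; rewrite /pull11 /d'01 /d''10 => <-.
by case: (phiE phi e') => *; ring.
Qed.

(* Along such an edge the pull-back of a form is constant near [v']: either the
   edge is contracted, or forms are constant near the interior leaf [phiV phi v']. *)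
Definition flat_edge v' e' : Prop :=
  phiE phi e' = None \/ valency (phiV phi v') = 1%N /\ bdry (phiV phi v') = false.

Lemma const_near0_pull v' e' (g : R -> R) (h : E G -> R -> R) k c c' :
  src e' = v' -> flat_edge v' e' ->
  (forall x, g x = if phiE phi e' is Some e then h e (dphi phi e' * x) * k else c) ->
  (valency (phiV phi v') = 1%N -> bdry (phiV phi v') = false ->
     forall e, src e = phiV phi v' -> const_near0 (h e) c') ->
  c' * k = c -> const_near0 g c.
Proof.
move=> He Hflat Hg Hh Hc; case Hp: (phiE phi e') Hg => [e|] Hg; last first.
  by exists 1; split=> [|x _]; [lra|].
case: Hflat => [|[Vv Bv]]; first by rewrite Hp.
have Se : src e = phiV phi v' by rewrite (phiE_src Hp) He.
apply: (const_near0_map (const_near0_dilate (dphi_gt0 Hp) (Hh Vv Bv e Se))) => x Hx.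
by rewrite Hg Hx.
Qed.

Lemma pull0_const_near0 f v' e' : A00 f -> src e' = v' -> flat_edge v' e' ->
  const_near0 (fE (pull0 phi f) e') (fV f (phiV phi v')).
Proof.
move=> [_ [_ [_ f_int]]] He Hflat.
apply: (const_near0_pull (h := fE f) (k := 1) (c' := fV f (phiV phi v')) He Hflat) => [x|Vv Bv e Se|].
- by rewrite /= -He; case: (phiE phi e') => *; ring.
- exact: (f_int _ Bv).1 Vv e Se.
- ring.
Qed.

Lemma pull1_const_near0 a v' e' : A10 a -> src e' = v' -> flat_edge v' e' ->
  const_near0 (pull1 phi a e') 0.
Proof.
move=> [_ [_ a_int]] He Hflat.
apply: (const_near0_pull (h := a) (k := dphi phi e') (c' := 0) He Hflat) => // [Vv Bv e Se|].
- exact: (a_int _ Bv).1 Vv e Se.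
- ring.
Qed.

Lemma pull11_const_near0 a v' e' : A11 a -> src e' = v' -> flat_edge v' e' ->
  const_near0 (pull11 phi a e') 0.
Proof.
move=> [_ [_ a_int]] He Hflat.
apply: (const_near0_pull (h := a) (k := dphi phi e' ^ 2) (c' := 0) He Hflat) => // [Vv Bv e Se|].
- exact: (a_int _ Bv).1 Vv e Se.
- ring.
Qed.

Lemma sum_out_pull v' (T : E G' -> R) (X : E G -> R) :
  (forall e', src e' = v' ->
     T e' = if phiE phi e' is Some e then wR e' * dphi phi e' * X e else 0) ->
  sum_out v' T = \big[Rplus/0]_(e | src e == phiV phi v')
     (\big[Rplus/0]_(e' | (src e' == v') && (phiE phi e' == Some e)) (wR e' * dphi phi e') * X e).
Proof.
move=> HT; rewrite /sum_out.
transitivity (\big[Rplus/0]_(e' | src e' == v') \big[Rplus/0]_(e | src e == phiV phi v')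
   (if phiE phi e' == Some e then wR e' * dphi phi e' * X e else 0)).
  apply: eq_bigr => e' /eqP He'; rewrite HT //; case Hp: (phiE phi e') => [e0|]; last by rewrite big1.
  rewrite (bigD1 e0) /=; last by rewrite (phiE_src Hp) He'.
  rewrite eqxx big1 ?Rplus_0_r // => e /andP [_ Ne].
  by case: eqP => // -[E0]; rewrite E0 eqxx in Ne.
by rewrite exchange_big; apply: eq_bigr => e _; rewrite -big_mkcondr -sumR_mulr.
Qed.

(** * Harmonic maps *)

Hypothesis phi_harmonic : harmonic phi.

Lemma harmonic_onto v' e1' e1 e2 : bdry v' = false -> src e1' = v' ->
  phiE phi e1' = Some e1 -> src e2 = phiV phi v' ->
  exists e2', src e2' = v' /\ phiE phi e2' = Some e2.
Proof.
move=> Hb H1 Hp1 H2.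
case: (pickP [pred e' | (src e' == v') && (phiE phi e' == Some e2)]) => [e2' /andP [/eqP ? /eqP ?]|none].
  by exists e2'.
have := phi_harmonic Hb (etrans (phiE_src Hp1) (f_equal _ H1)) H2.
rewrite [X in _ = X]big_pred0 //.
suff : 0 < \big[Rplus/0]_(e' | (src e' == v') && (phiE phi e' == Some e1))
             (wR e' / wR e1 * dphi phi e') by lra.
have w_gt0 e' : 0 < wR e' / wR e1 by apply: Rdiv_lt_0_compat; exact: wR_gt0.
apply: (sumR_gt0 (i0 := e1')); first by rewrite H1 Hp1 !eqxx.
  by apply: Rmult_lt_0_compat => //; exact: dphi_gt0 Hp1.
by move=> e' _; apply: Rmult_le_pos; [exact: Rlt_le|exact: dphi_ge0].
Qed.

Lemma image_interior_leaf v' e' e : bdry v' = false -> src e' = v' -> phiE phi e' = Some e ->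
  (forall e2', src e2' = v' -> phiE phi e2' <> None -> phiE phi e2' = Some e) ->
  valency (phiV phi v') = 1%N /\ bdry (phiV phi v') = false.
Proof.
move=> Hb He Hp Honly; split; last exact: interior_image Hp.
apply: (valency1_of_uniq (etrans (phiE_src Hp) (f_equal _ He))) => e2 He2.
have [e2' [H2 Hp2]] := harmonic_onto Hb He Hp He2.
by move: (Honly e2' H2); rewrite Hp2 => /(_ ltac:(discriminate)) [].
Qed.

Lemma flat_edge_valency1 v' e' : bdry v' = false -> valency v' = 1%N -> src e' = v' ->
  flat_edge v' e'.
Proof.
move=> Hb Hv He; case Hp: (phiE phi e') => [e|]; [right|by left].
by apply: (image_interior_leaf Hb He Hp) => e2' H2 _; rewrite (valency1_uniq Hv He H2).
Qed.

Lemma harmonic_valency2 v' e1' e2' e1 e2 : bdry v' = false -> valency v' = 2%N ->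
  src e1' = v' -> src e2' = v' -> e1' <> e2' ->
  phiE phi e1' = Some e1 -> phiE phi e2' = Some e2 -> e1 <> e2 ->
  valency (phiV phi v') = 2%N /\
  wR e1' / wR e1 * dphi phi e1' = wR e2' / wR e2 * dphi phi e2'.
Proof.
move=> Hb Hv H1 H2 H12 Hp1 Hp2 N.
have cases := valency2_cases Hv H1 H2 H12.
have S1 : src e1 = phiV phi v' by rewrite (phiE_src Hp1) H1.
have S2 : src e2 = phiV phi v' by rewrite (phiE_src Hp2) H2.
split.
  apply: (valency2_of_cases S1 S2 N) => e3 H3.
  have [e3' [H3' Hp3]] := harmonic_onto Hb H1 Hp1 H3.
  by case: (cases _ H3') => ?; subst e3'; [left|right]; congruence.
have := phi_harmonic Hb S1 S2.
have sum2 F : \big[Rplus/0]_(e' | src e' == v') F e' = F e1' + F e2'.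
  exact: sum_out_valency2 F Hv H1 H2 H12.
have [N12 N21] : (Some e1 == Some e2) = false /\ (Some e2 == Some e1) = false.
  by split; apply/eqP => -[E]; [exact: N|exact: N (esym E)].
by rewrite !big_mkcondr !sum2 /= Hp1 Hp2 !eqxx N12 N21 Rplus_0_r Rplus_0_l.
Qed.

Lemma flat_or_valency2 v' e1' e2' : bdry v' = false -> valency v' = 2%N ->
  src e1' = v' -> src e2' = v' -> e1' <> e2' ->
  (flat_edge v' e1' /\ flat_edge v' e2') \/
  exists e1 e2, [/\ phiE phi e1' = Some e1, phiE phi e2' = Some e2, e1 <> e2,
    src e1 = phiV phi v' & src e2 = phiV phi v'] /\
    [/\ valency (phiV phi v') = 2%N, bdry (phiV phi v') = false &
        wR e1' / wR e1 * dphi phi e1' = wR e2' / wR e2 * dphi phi e2'].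
Proof.
move=> Hb Hv H1 H2 H12; have cases := valency2_cases Hv H1 H2 H12.
have single_image e' e : src e' = v' -> phiE phi e' = Some e ->
    (forall e3', src e3' = v' -> phiE phi e3' <> None -> phiE phi e3' = Some e) ->
    flat_edge v' e1' /\ flat_edge v' e2'.
  by move=> He Hp Honly; have flat := image_interior_leaf Hb He Hp Honly; split; right.
case Hp1: (phiE phi e1') => [e1|]; case Hp2: (phiE phi e2') => [e2|].
- case: (e1 =P e2) => [E12|N].
    by left; apply: (single_image _ _ H1 Hp1) => e3' /cases [] ->; rewrite ?Hp1 ?Hp2 ?E12.
  have [Vv Hr] := harmonic_valency2 Hb Hv H1 H2 H12 Hp1 Hp2 N.
  right; exists e1, e2; split; split=> //; try exact: interior_image Hp1.
    by rewrite (phiE_src Hp1) H1.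
  by rewrite (phiE_src Hp2) H2.
- by left; apply: (single_image _ _ H1 Hp1) => e3' /cases [] ->; rewrite ?Hp1 ?Hp2.
- by left; apply: (single_image _ _ H2 Hp2) => e3' /cases [] ->; rewrite ?Hp1 ?Hp2.
- by left; split; left.
Qed.

Lemma sum_out_pull_eq0 v' (T : E G' -> R) (X : E G -> R) : bdry v' = false ->
  (forall e', src e' = v' ->
     T e' = if phiE phi e' is Some e then wR e' * dphi phi e' * X e else 0) ->
  (bdry (phiV phi v') = false -> sum_out (phiV phi v') (fun e => wR e * X e) = 0) ->
  sum_out v' T = 0.
Proof.
move=> Hb HT HX; rewrite (sum_out_pull HT).
case Hbv: (bdry (phiV phi v')).
  apply: big1 => e _; rewrite big1 ?Rmult_0_l // => e' /andP [/eqP He' /eqP Hp].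
  by rewrite (interior_image Hb He' Hp) in Hbv.
case: (pickP [pred e : E G | src e == phiV phi v']) => [e0 /eqP He0|none]; last first.
  by rewrite big_pred0.
(* by harmonicity each inner sum is [wR e] times one and the same constant [K] *)
set K := \big[Rplus/0]_(e' | (src e' == v') && (phiE phi e' == Some e0))
           (wR e' / wR e0 * dphi phi e').
transitivity (K * sum_out (phiV phi v') (fun e => wR e * X e)); last by rewrite HX ?Rmult_0_r.
rewrite /sum_out -sumR_mull; apply: eq_bigr => e /eqP He.
rewrite /K -(phi_harmonic Hb He He0) -!sumR_mulr.
by apply: eq_bigr => e' _; have := wR_gt0 e => ?; field; lra.
Qed.

Lemma pull0_A00 f : A00 f -> A00 (pull0 phi f).
Proof.
move=> Hf; have [f_src [f_rev [f_sm f_int]]] := Hf.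
split; [|split; [|split]].
- move=> e' /=; case Hp: (phiE phi e') => [e|] //.
  by rewrite Rmult_0_r f_src (phiE_src Hp).
- move=> e' x Hx /=; rewrite phiE_rev dphi_rev; case Hp: (phiE phi e') => [e|] /=.
    by rewrite f_rev ?(dphi_flip _ Hp) //; exact: dphi_in_edge Hp Hx.
  by rewrite (phiE_contr Hp).
- by move=> e'; exact: pull0_smooth.
- move=> v' Hb; split; [|split].
  + by move=> Hv e' He; exact: pull0_const_near0 Hf He (flat_edge_valency1 Hb Hv He).
  + move=> Hv e1' e2' H1 H2 H12.
    case: (flat_or_valency2 Hb Hv H1 H2 H12) => [[F1 F2]|[e1 [e2 [[Hp1 Hp2 N S1 S2] [Vv Bv Hr]]]]].
      apply: (pair_smooth_const (pull0_smooth _ Hf) (pull0_smooth _ Hf)).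
        exact: pull0_const_near0 Hf H1 F1.
      exact: pull0_const_near0 Hf H2 F2.
    apply: (pair_smooth_pull (c := 1) Hp1 Hp2 Hr (f_sm e1) (f_sm e2)) => [x _|x _|].
    * by rewrite /= Hp1; ring.
    * by rewrite /= Hp2; ring.
    * exact: (f_int _ Bv).2.1 Vv e1 e2 S1 S2 N.
  + move=> _; apply: (sum_out_pull_eq0 (X := fun e => Dn (len e) (fE f e) 1 0) Hb).
      move=> e' _; have := pull1_d'0 Hf (in_edge0 e'); rewrite /pull1 /d'0 /= => <-.
      by case: (phiE phi e') => *; rewrite ?Rmult_0_r; ring.
    exact: A00_balanced Hf.
Qed.

Lemma pull1_A10 a : A10 a -> A10 (pull1 phi a).
Proof.
move=> Ha; have [a_rev [a_sm a_int]] := Ha.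
split; [|split].
- move=> e' x Hx; rewrite /pull1 phiE_rev dphi_rev; case Hp: (phiE phi e') => [e|] /=; last ring.
  by rewrite a_rev ?(dphi_flip _ Hp); [ring|exact: dphi_in_edge Hp Hx].
- by move=> e'; exact: pull1_smooth.
- move=> v' Hb; split; [|split].
  + by move=> Hv e' He; exact: pull1_const_near0 Ha He (flat_edge_valency1 Hb Hv He).
  + move=> Hv e1' e2' H1 H2 H12.
    case: (flat_or_valency2 Hb Hv H1 H2 H12) => [[F1 F2]|[e1 [e2 [[Hp1 Hp2 N S1 S2] [Vv Bv Hr]]]]].
      apply: (pair_smooth_const (c := 0)).
      * by apply: (smooth_on_scal (pull1_smooth _ Ha)).
      * by apply: (smooth_on_scal (c := - wR e2') (pull1_smooth _ Ha)) => x _; ring.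
      * by apply: (const_near0_map (pull1_const_near0 Ha H1 F1)) => x ->; ring.
      * by apply: (const_near0_map (pull1_const_near0 Ha H2 F2)) => x ->; ring.
    have [w1 w2] := (wR_gt0 e1, wR_gt0 e2).
    have T1 : smooth_on (len e1) (fun x => wR e1 * a e1 x) by apply: smooth_on_scal (a_sm e1) _.
    have T2 : smooth_on (len e2) (fun x => - (wR e2 * a e2 x)).
      by apply: (smooth_on_scal (c := - wR e2) (a_sm e2)) => x _; ring.
    apply: (pair_smooth_pull (c := wR e1' / wR e1 * dphi phi e1') Hp1 Hp2 Hr T1 T2) => [x _|x _|].
    * by rewrite /pull1 Hp1; field; lra.
    * by rewrite Hr /pull1 Hp2; field; lra.
    * exact: (a_int _ Bv).2.1 Vv e1 e2 S1 S2 N.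
  + move=> _; apply: (sum_out_pull_eq0 (X := fun e => a e 0) Hb); last exact: A10_balanced Ha.
    by move=> e' _; rewrite /pull1; case: (phiE phi e') => *; rewrite ?Rmult_0_r; ring.
Qed.

Lemma pull11_A11 a : A11 a -> A11 (pull11 phi a).
Proof.
move=> Ha; have [a_rev [a_sm a_int]] := Ha.
split; [|split].
- move=> e' x Hx; rewrite /pull11 phiE_rev dphi_rev; case Hp: (phiE phi e') => [e|] //=.
  by rewrite a_rev ?(dphi_flip _ Hp) //; exact: dphi_in_edge Hp Hx.
- by move=> e'; exact: pull11_smooth.
- move=> v' Hb; split.
  + by move=> Hv e' He; exact: pull11_const_near0 Ha He (flat_edge_valency1 Hb Hv He).
  + move=> Hv e1' e2' H1 H2 H12.
    case: (flat_or_valency2 Hb Hv H1 H2 H12) => [[F1 F2]|[e1 [e2 [[Hp1 Hp2 N S1 S2] [Vv Bv Hr]]]]].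
      apply: (pair_smooth_const (c := 0)).
      * by apply: (smooth_on_scal (pull11_smooth _ Ha)).
      * by apply: (smooth_on_scal (pull11_smooth _ Ha)).
      * by apply: (const_near0_map (pull11_const_near0 Ha H1 F1)) => x ->; ring.
      * by apply: (const_near0_map (pull11_const_near0 Ha H2 F2)) => x ->; ring.
    have [w1 w2] := (wR_gt0 e1, wR_gt0 e2).
    have T1 : smooth_on (len e1) (fun x => wR e1 ^ 2 * a e1 x) by apply: smooth_on_scal (a_sm e1) _.
    have T2 : smooth_on (len e2) (fun x => wR e2 ^ 2 * a e2 x) by apply: smooth_on_scal (a_sm e2) _.
    apply: (pair_smooth_pull (c := (wR e1' / wR e1 * dphi phi e1') ^ 2) Hp1 Hp2 Hr T1 T2) => [x _|x _|].
    * by rewrite /pull11 Hp1; field; lra.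
    * by rewrite Hr /pull11 Hp2; field; lra.
    * exact: (a_int _ Bv).2 Vv e1 e2 S1 S2 N.
Qed.

End PLMap.

Unset Implicit Arguments.
Set Strict Implicit.

Ltac pull_pointwise :=
  let e' := fresh "e'" in
  (split=> [?|e' ? _] || move=> e' ? _);
  unfold pull0, pull1, pull11, addc, scalec, mul0c, wedge10_01, wedge01_10; simpl;
  try case: (phiE _ e') => *; ring.

Theorem lemma3p11 (G' G : wmgraph) (phi : plmap G' G) :
  harmonic phi ->
  (* phi^* maps A^{p,q}(Sigma) into A^{p,q}(Sigma') *)
  (forall f, A00 f -> A00 (pull0 phi f)) /\
  (forall a, A10 a -> A10 (pull1 phi a)) /\
  (forall a, A01 a -> A01 (pull1 phi a)) /\
  (forall a, A11 a -> A11 (pull11 phi a)) /\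
  (* R-linearity in each bidegree *)
  (forall f g, A00 f -> A00 g -> eq0 (pull0 phi (add0 f g)) (add0 (pull0 phi f) (pull0 phi g))) /\
  (forall c f, A00 f -> eq0 (pull0 phi (scale0 c f)) (scale0 c (pull0 phi f))) /\
  (forall a b, A10 a -> A10 b -> eqc (pull1 phi (addc a b)) (addc (pull1 phi a) (pull1 phi b))) /\
  (forall c a, A10 a -> eqc (pull1 phi (scalec c a)) (scalec c (pull1 phi a))) /\
  (forall a b, A01 a -> A01 b -> eqc (pull1 phi (addc a b)) (addc (pull1 phi a) (pull1 phi b))) /\
  (forall c a, A01 a -> eqc (pull1 phi (scalec c a)) (scalec c (pull1 phi a))) /\
  (forall a b, A11 a -> A11 b -> eqc (pull11 phi (addc a b)) (addc (pull11 phi a) (pull11 phi b))) /\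
  (forall c a, A11 a -> eqc (pull11 phi (scalec c a)) (scalec c (pull11 phi a))) /\
  (* unit and products *)
  eq0 (pull0 phi (one0 G)) (one0 G') /\
  (forall f g, A00 f -> A00 g -> eq0 (pull0 phi (mul0 f g)) (mul0 (pull0 phi f) (pull0 phi g))) /\
  (forall f a, A00 f -> A10 a -> eqc (pull1 phi (mul0c f a)) (mul0c (pull0 phi f) (pull1 phi a))) /\
  (forall f a, A00 f -> A01 a -> eqc (pull1 phi (mul0c f a)) (mul0c (pull0 phi f) (pull1 phi a))) /\
  (forall f a, A00 f -> A11 a -> eqc (pull11 phi (mul0c f a)) (mul0c (pull0 phi f) (pull11 phi a))) /\
  (forall a b, A10 a -> A01 b ->
     eqc (pull11 phi (wedge10_01 a b)) (wedge10_01 (pull1 phi a) (pull1 phi b))) /\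
  (forall b a, A01 b -> A10 a ->
     eqc (pull11 phi (wedge01_10 b a)) (wedge01_10 (pull1 phi b) (pull1 phi a))) /\
  (* commutation with d' and d'' *)
  (forall f, A00 f -> eqc (pull1 phi (d'0 f)) (d'0 (pull0 phi f))) /\
  (forall f, A00 f -> eqc (pull1 phi (d''0 f)) (d''0 (pull0 phi f))) /\
  (forall a, A10 a -> eqc (pull11 phi (d''10 a)) (d''10 (pull1 phi a))) /\
  (forall a, A01 a -> eqc (pull11 phi (d'01 a)) (d'01 (pull1 phi a))).
Proof.
move=> Hh.
split; first exact: pull0_A00.
(* [A01] and [d''0] are definitionally [A10] and [d'0]. *)
split; first exact: pull1_A10.
split; first exact: pull1_A10.
split; first exact: pull11_A11.
do 15 (split; first by move=> *; pull_pointwise).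
split; first exact: pull1_d'0.
split; first exact: pull1_d'0.
split; first exact: pull11_d''10.
exact: pull11_d'01.
Qed.
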